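(* Let $T$ be a ring which is integral over its center $C=C(T)$. Suppose $A$ is a conch maximal subring of $C$, and suppose the integral closure $B$ of $A$ in $T$ (the set of elements of $T$ that are roots of monic polynomials with coefficients in $A$) is a subring of $T$. Then $T$ has a maximal subring $R$ with $B\subseteq R$ and $R\cap C=A$.
   Context: All rings are associative with identity $1\neq0$; subrings contain the identity. A maximal subring of a ring $S$ is a proper subring with no subring strictly between it and $S$. $T$ is integral over its center if every element of $T$ is a root of a monic polynomial with coefficients in $C(T)$. A conch maximal subring of the commutative ring $C$ is a maximal subring $A$ of $C$ for which there exists a unit $u$ of $C$ with $u\in A$ and $u^{-1}\notin A$. *)

From HB Require Import structures.
From mathcomp Require Import all_boot all_order all_algebra.
Set Implicit Arguments. Unset Strict Implicit. Unset Printing Implicit Defensive.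
Import GRing.Theory.
Local Open Scope ring_scope.

Definition is_subring (T : nzRingType) (S : T -> Prop) : Prop :=
  [/\ S 1, (forall x y, S x -> S y -> S (x - y)) &
      (forall x y, S x -> S y -> S (x * y))].

Definition subset_of (T : Type) (S U : T -> Prop) : Prop := forall x, S x -> U x.

Definition maximal_subring_of (T : nzRingType) (S R : T -> Prop) : Prop :=
  [/\ is_subring R, subset_of R S, (exists x, S x /\ ~ R x) &
      (forall R' : T -> Prop, is_subring R' -> subset_of R R' -> subset_of R' S ->
         (forall x, R' x <-> R x) \/ (forall x, R' x <-> S x))].

Definition center (T : nzRingType) : T -> Prop :=
  fun x => forall y : T, x * y = y * x.

Definition integral_over (T : nzRingType) (S : T -> Prop) (x : T) : Prop :=
  exists p : {poly T}, [/\ p \is monic, (forall i, S p`_i) & p.[x] = 0].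

Definition integral_closure (T : nzRingType) (S : T -> Prop) : T -> Prop :=
  fun x => integral_over S x.

Definition conch_maximal_subring_of (T : nzRingType) (C A : T -> Prop) : Prop :=
  maximal_subring_of C A /\
  exists u v : T, [/\ C u, C v, u * v = 1 /\ v * u = 1 & A u /\ ~ A v].

(* Write C for the center of T and v = u^-1 for the conch unit.  Maximality of
   A in C gives C = A[v], so every central element becomes an element of A
   after multiplication by a power of u; consequently every element of T
   (integral over C) becomes integral over A, i.e. lands in B, after
   multiplication by a power of u.  On the other hand v is not in B, since an
   integral equation for v over A, multiplied by a power of u, expresses v as
   an element of A.  By Zorn's lemma take R maximal among the subrings of T
   containing B and avoiding v.  Any subring strictly larger than R contains
   v, hence contains every x = v^K (u^K x): it is T.  Finally R ∩ C lies between A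
   and C and avoids v, so it equals A. *)

From mathcomp Require Import all_boot all_order all_algebra.
From mathcomp Require Import boolp classical_sets.
Import GRing.Theory.
Local Open Scope classical_set_scope.
Local Open Scope ring_scope.
Set Implicit Arguments. Unset Strict Implicit.

Section SubringClosure.
Variables (T : nzRingType) (S : T -> Prop).
Hypothesis subS : is_subring S.

Lemma subring1 : S 1. Proof. by case: subS. Qed.

Lemma subringB x y : S x -> S y -> S (x - y).
Proof. by case: subS => _ + _; apply. Qed.

Lemma subringM x y : S x -> S y -> S (x * y).
Proof. by case: subS => _ _; apply. Qed.

Lemma subring0 : S 0.
Proof. by rewrite -(subrr 1); apply: subringB; apply: subring1. Qed.

Lemma subringN x : S x -> S (- x).
Proof. by move=> Sx; rewrite -sub0r; apply: subringB => //; apply: subring0. Qed.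

Lemma subringD x y : S x -> S y -> S (x + y).
Proof. by move=> Sx Sy; rewrite -[y]opprK; apply: subringB => //; apply: subringN. Qed.

Lemma subringX x n : S x -> S (x ^+ n).
Proof.
move=> Sx; elim: n => [|n IHn]; first by rewrite expr0; apply: subring1.
by rewrite exprS; apply: subringM.
Qed.

Lemma subring_sum n (F : 'I_n -> T) : (forall i, S (F i)) -> S (\sum_(i < n) F i).
Proof. by move=> SF; apply: big_ind => //; [apply: subring0 | apply: subringD]. Qed.

Lemma subset_integral_closure : subset_of S (integral_closure S).
Proof.
move=> a Sa; exists ('X - a%:P); split; first exact: monicXsubC.
- case=> [|[|i]]; rewrite coefB coefX coefC /= ?subr0 ?sub0r ?subrr.
  + exact: subringN.
  + exact: subring1.
  + exact: subring0.
- by rewrite hornerXsubC subrr.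
Qed.

End SubringClosure.

Lemma subringI (T : nzRingType) (S S' : T -> Prop) :
  is_subring S -> is_subring S' -> is_subring (fun x => S x /\ S' x).
Proof.
move=> subS subS'; split.
- by split; apply: subring1.
- by move=> x y [? ?] [? ?]; split; apply: subringB.
- by move=> x y [? ?] [? ?]; split; apply: subringM.
Qed.

Lemma center_subring (T : nzRingType) : is_subring (@center T).
Proof.
split; rewrite /center.
- by move=> y; rewrite mul1r mulr1.
- by move=> x y Cx Cy z; rewrite mulrBl mulrBr Cx Cy.
- by move=> x y Cx Cy z; rewrite -mulrA Cy mulrA Cx mulrA.
Qed.

Section MaximalSubring.
Variables (T : nzRingType) (S A D : T -> Prop).
Hypotheses (maxA : maximal_subring_of S A) (subD : is_subring D)
  (AD : subset_of A D) (DS : subset_of D S).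

Lemma maximal_subring_full y : D y -> ~ A y -> subset_of S D.
Proof.
move=> Dy nAy; case: maxA => _ _ _ /(_ D subD AD DS) [eqDA|eqDS x /eqDS //].
by case: nAy; apply/eqDA.
Qed.

Lemma maximal_subring_eq y : S y -> ~ D y -> subset_of D A.
Proof.
move=> Sy nDy; case: maxA => _ _ _ /(_ D subD AD DS) [eqDA x /eqDA //|eqDS].
by case: nDy; apply/eqDS.
Qed.

End MaximalSubring.

Lemma subring_chain_setU (T : nzRingType) (B : set T) (F : set (set T)) :
  is_subring B -> total_on F subset -> (forall X, F X -> is_subring (B `|` X)) ->
  is_subring (B `|` \bigcup_(X in F) X).
Proof.
move=> subB chainF subF.
pose U := B `|` \bigcup_(X in F) X.
have common x y : U x -> U y ->
    (B x /\ B y) \/ exists2 X, F X & (B `|` X) x /\ (B `|` X) y.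
  case=> [Bx|[X FX Xx]] [By|[Y FY Yy]]; first by left.
  - by right; exists Y => //; split; [left | right].
  - by right; exists X => //; split; [right | left].
  - right; case: (chainF X Y FX FY) => [XY|YX].
      by exists Y => //; split; right => //; apply: XY.
    by exists X => //; split; right => //; apply: YX.
have lift X : F X -> forall y, (B `|` X) y -> U y.
  by move=> FX y [By|Xy]; [left | right; exists X].
split; first by left; apply: subring1.
- move=> x y Ux Uy; case: (common x y Ux Uy) => [[Bx By]|[X FX [Xx Xy]]].
    by left; apply: subringB.
  by apply: (lift X FX); apply: subringB => //; apply: subF.
- move=> x y Ux Uy; case: (common x y Ux Uy) => [[Bx By]|[X FX [Xx Xy]]].
    by left; apply: subringM.
  by apply: (lift X FX); apply: subringM => //; apply: subF.
Qed.

(* Zorn runs over the X with B `|` X a subring avoiding v, not over the subrings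
   containing B, because Zorn_bigcup needs the empty chain (union set0) to be
   admissible. *)
Lemma exists_maximal_subring_avoiding (T : nzRingType) (B : T -> Prop) (v : T) :
  is_subring B -> ~ B v ->
  exists R : T -> Prop, [/\ is_subring R, subset_of B R, ~ R v &
    forall R', is_subring R' -> subset_of R R' -> ~ R' v -> subset_of R' R].
Proof.
move=> subB nBv.
pose P (X : set T) := is_subring (B `|` X) /\ ~ (B `|` X) v.
have [R0 [[subR nRv] maxR0]] : exists R0, P R0 /\ forall Y, R0 `<` Y -> ~ P Y.
  apply: Zorn_bigcup => F FP chainF; split.
    by apply: subring_chain_setU => // X /FP [].
  by case=> [//|[X /FP [_ nXv] Xv]]; apply: nXv; right.
exists (B `|` R0); split=> //; first by move=> x Bx; left.
move=> R' subR' RR' nR'v x R'x; right.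
have eqR' : B `|` R' = R' by rewrite setUC; apply/setUidPl => y By; apply: RR'; left.
have R0R' : R0 `<=` R' by move=> y R0y; apply: RR'; right.
suff : R' `<=` R0 by apply.
apply: contrapT => nR'R0; apply: (maxR0 R') => //.
by rewrite /P eqR'.
Qed.

Lemma maximal_subring_avoiding (T : nzRingType) (R : T -> Prop) (v : T) :
  is_subring R -> ~ R v ->
  (forall R', is_subring R' -> subset_of R R' -> ~ R' v -> subset_of R' R) ->
  (forall x, exists K r, R r /\ x = v ^+ K * r) ->
  maximal_subring_of (fun _ => True) R.
Proof.
move=> subR nRv maxR genR; split=> //; first by exists v.
move=> R' subR' RR' _; have [R'v|nR'v] := pselect (R' v).
  right=> x; split=> // _; have [K [r [Rr ->]]] := genR x.
  by apply: subringM => //; [apply: subringX | apply: RR'].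
by left=> x; split; [apply: maxR | apply: RR'].
Qed.

Lemma ex_common_bound (P : nat -> nat -> Prop) n :
  (forall i k m, P i k -> P i (k + m)%N) ->
  (forall i, (i < n)%N -> exists k, P i k) ->
  exists K, forall i, (i < n)%N -> P i K.
Proof.
move=> monoP; elim: n => [|n IHn] exP; first by exists 0%N.
have [K PK] : exists K, forall i, (i < n)%N -> P i K.
  by apply: IHn => i ltin; apply: exP; apply: ltnW.
have [k Pk] := exP n (ltnSn n).
exists (K + k)%N => i; rewrite ltnS leq_eqVlt => /orP[/eqP->|ltin].
  by rewrite addnC; apply: monoP.
by apply: monoP; apply: PK.
Qed.

Section ConchUnit.
Variables (T : nzRingType) (A : T -> Prop) (u v : T).
Hypotheses (subA : is_subring A) (Cu : center u) (Au : A u)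
  (uv1 : u * v = 1) (vu1 : v * u = 1).

Lemma commXu k y : GRing.comm (u ^+ k) y.
Proof. by apply/commr_sym/commrX; rewrite /GRing.comm Cu. Qed.

Lemma mulrXu_mem c k m : A (c * u ^+ k) -> A (c * u ^+ (k + m)).
Proof. by move=> Acu; rewrite exprD mulrA; apply: subringM => //; apply: subringX. Qed.

Lemma mulXvu k : v ^+ k * u ^+ k = 1.
Proof. by rewrite -exprMn_comm ?vu1 ?expr1n // /GRing.comm Cu. Qed.

Lemma mulXuv k : u ^+ k * v ^+ k = 1.
Proof. by rewrite -exprMn_comm ?uv1 ?expr1n // /GRing.comm Cu. Qed.

(* Multiply the monic equation v^(m+1) + ... + p_0 = 0 by u^m. *)
Lemma integral_inverse_mem : integral_over A v -> A v.
Proof.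
case=> p [monp Ap pv0].
have : (0 < size p)%N by rewrite size_poly_gt0 monic_neq0.
have lcp : p`_(size p).-1 = 1 by apply/monicP.
move: pv0; rewrite horner_coef; case: (size p) lcp => [|[|m]] // lcp.
  by rewrite big_ord1 expr0 mulr1 lcp => /eqP; rewrite oner_eq0.
move=> /(congr1 (GRing.mul (u ^+ m))); rewrite mulr0 big_ord_recr /= mulrDr lcp.
rewrite mul1r exprSr mulrA mulXuv mul1r mulr_sumr => /eqP.
rewrite addrC addr_eq0 => /eqP -> _.
apply: subringN => //; apply: subring_sum => // i.
have lei : (i <= m)%N by rewrite -ltnS.
rewrite mulrA (commXu m) -mulrA.
have -> : u ^+ m = u ^+ (m - i) * u ^+ i by rewrite -exprD subnK.
rewrite -mulrA mulXuv mulr1.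
by apply: subringM => //; apply: subringX.
Qed.

Hypothesis center_mulXu_mem : forall c, center c -> exists k, A (c * u ^+ k).

(* If p is monic of degree n with central coefficients and p(x) = 0, then
   u^(K n) p(x) = 0 is a monic equation for u^K x with coefficients p_i u^(K(n-i)). *)
Lemma integral_mulXu x : integral_over (@center T) x ->
  exists K, integral_over A (u ^+ K * x).
Proof.
case=> p [monp Cp px0].
have : (0 < size p)%N by rewrite size_poly_gt0 monic_neq0.
have lcp : p`_(size p).-1 = 1 by apply/monicP.
move: px0; rewrite horner_coef; case: (size p) lcp => [//|n] /= lcp px0 _.
have [K AK] : exists K, forall i, (i < n)%N -> A (p`_i * u ^+ K).
  by apply: (ex_common_bound (P := fun i k => A (p`_i * u ^+ k))) => [i k m|i _];
    [apply: mulrXu_mem | apply: center_mulXu_mem].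
pose q := \poly_(i < n.+1) (p`_i * u ^+ (K * (n - i))).
have qn : p`_n * u ^+ (K * (n - n)) = 1 by rewrite subnn muln0 mulr1 lcp.
have sizeq : size q = n.+1 by rewrite size_poly_eq //= qn oner_neq0.
exists K, q; split.
- by apply/monicP; rewrite lead_coef_poly //= qn oner_neq0.
- move=> i; rewrite coef_poly; case: ltnP => [|_]; last exact: subring0.
  rewrite ltnS leq_eqVlt => /orP[/eqP->|ltin]; first by rewrite qn; apply: subring1.
  have : (K <= K * (n - i))%N by rewrite leq_pmulr // subn_gt0.
  by move/subnK <-; rewrite addnC; apply: mulrXu_mem; apply: AK.
- rewrite horner_coef sizeq.
  transitivity (u ^+ (K * n) * \sum_(i < n.+1) p`_i * x ^+ i); last by rewrite px0 mulr0.
  rewrite mulr_sumr; apply: eq_bigr => i _.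
  rewrite coef_poly ltn_ord exprMn_comm; last exact: commXu.
  have lein : (i <= n)%N by rewrite -ltnS.
  rewrite -exprM mulrA -(mulrA p`_i) -exprD -mulnDr subnK //.
  by rewrite [RHS]mulrA -(Cp i (u ^+ _)).
Qed.

End ConchUnit.

(* The central c with c u^k in A for some k form a subring of C containing A
   and v, hence all of C by maximality. *)
Lemma center_mulXu_mem (T : nzRingType) (A : T -> Prop) (u v : T) :
  maximal_subring_of (@center T) A -> center u -> center v -> A u ->
  v * u = 1 -> ~ A v ->
  forall c, center c -> exists k, A (c * u ^+ k).
Proof.
move=> maxA Cu Cv Au vu1 nAv.
have [subA AC _ _] := maxA.
pose D c := center c /\ exists k, A (c * u ^+ k).
have subD : is_subring D.
  split.
  - split; first exact: subring1 (center_subring T).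
    by exists 0%N; rewrite mulr1; apply: subring1.
  - move=> x y [Cx [k Ak]] [Cy [m Am]]; split; first exact: (subringB (center_subring T) Cx Cy).
    exists (k + m)%N; rewrite mulrBl; apply: subringB => //; first exact: (mulrXu_mem subA Au).
    by rewrite addnC; apply: (mulrXu_mem subA Au).
  - move=> x y [Cx [k Ak]] [Cy [m Am]]; split; first exact: (subringM (center_subring T) Cx Cy).
    exists (k + m)%N; rewrite exprD mulrA -(mulrA x) -(commXu Cu k y) !mulrA -mulrA.
    exact: subringM.
have AD : subset_of A D by move=> a Aa; split; [exact: (AC _ Aa) | exists 0%N; rewrite mulr1].
have Dv : D v by split=> //; exists 1%N; rewrite expr1 vu1; exact: (subring1 subA).
by move=> c /(maximal_subring_full maxA subD AD (fun _ => @proj1 _ _) Dv nAv) [].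
Qed.

Theorem theorem3p1 (T : nzRingType) (A : T -> Prop) :
  (forall x : T, integral_over (@center T) x) ->
  conch_maximal_subring_of (@center T) A ->
  is_subring (integral_closure A) ->
  exists R : T -> Prop,
    [/\ maximal_subring_of (fun _ => True) R,
        subset_of (integral_closure A) R &
        (forall x, (R x /\ @center T x) <-> A x)].
Proof.
move=> intC [maxA [u [v [Cu Cv [uv1 vu1] [Au nAv]]]]] subB.
have [subA AC _ _] := maxA.
have nBv : ~ integral_closure A v by move/(integral_inverse_mem subA Cu Au uv1).
have [R [subR BR nRv maxR]] := exists_maximal_subring_avoiding subB nBv.
have AR : subset_of A R by move=> a /(subset_integral_closure subA); apply: BR.
exists R; split=> //.
- apply: (maximal_subring_avoiding subR nRv maxR) => x.
  have locC := center_mulXu_mem maxA Cu Cv Au vu1 nAv.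
  have [K BuKx] := integral_mulXu subA Cu Au locC (intC x).
  by exists K, (u ^+ K * x); split; [apply: BR | rewrite mulrA mulXvu ?mul1r].
- move=> x; split; last by move=> Ax; split; [apply: AR | exact: (AC _ Ax)].
  have ACR : subset_of A (fun y => R y /\ center y).
    by move=> a Aa; split; [apply: AR | exact: (AC _ Aa)].
  have nCRv : ~ (R v /\ center v) by case.
  exact: (maximal_subring_eq maxA (subringI subR (center_subring T)) ACR
    (fun _ => @proj2 _ _) Cv nCRv).
Qed.
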